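(* Let $\mathbb X,\mathbb H,\mathbb Y$ be separable real Hilbert spaces, $\mathbf W\colon\mathbb X\to\mathbb H$ and $\mathbf A\colon\mathbb H\to\mathbb Y$ bounded linear operators, $\mathcal R\colon\mathbb X\to[0,\infty]$ proper, convex and weakly lower semicontinuous, $(\phi_\lambda)_{\lambda\in\Lambda}$ an orthonormal basis of $\mathbb H$ indexed by a countable set $\Lambda$, and $(\kappa_\lambda)_{\lambda\in\Lambda}$ weights with $\kappa_\lambda\ge a$ for all $\lambda$, for some $a>0$. Assume there is $x\in\mathbb X$ with $\mathcal R(x)+\|\mathbf W x\|_{1,\kappa}<\infty$. Suppose $(x_\star,h_\star,y_\star)\in\mathbb X\times\mathbb H\times\mathbb Y$ satisfies the following: (1.1) $\mathbf W x_\star=h_\star$ and $\mathbf A h_\star=y_\star$; (1.2) there is $u\in\mathbb H$ with $\mathbf W^*u\in\partial\mathcal R(x_\star)$; (1.3) there is $v\in\mathbb Y$ with $\eta:=\mathbf A^*v-u\in\partial\|\cdot\|_{1,\kappa}(h_\star)$; (1.4) the restriction $\mathbf A_{\Omega[\eta]}\colon\mathbb H_{\Omega[\eta]}\to\mathbb Y$ is injective. Let $C>0$. Then for every $\delta>0$, every $y^\delta\in\mathbb Y$ with $\|y^\delta-y_\star\|\le\delta$, $\alpha=C\delta$, and every minimizer $(x_\alpha^\delta,h_\alpha^\delta)$ of $$\mathcal B_{\alpha,y^\delta}(x,h)=\tfrac12\|\mathbf W x-h\|^2+\tfrac12\|\mathbf A h-y^\delta\|^2+\alpha\big(\mathcal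 R(x)+\|h\|_{1,\kappa}\big)$$ over $\mathbb X\times\mathbb H$, we have $$\mathcal D^{\mathcal R}_{\mathbf W^*u}(x_\alpha^\delta,x_\star)\le c_{(u,v)}\,\delta,\qquad \|h_\alpha^\delta-h_\star\|\le d_{(u,v)}\,\delta,$$ where $\|(u,v)\|=(\|u\|^2+\|v\|^2)^{1/2}$, $$c_{(u,v)}=\frac{(1+C\|(u,v)\|)^2}{2C},\qquad d_{(u,v)}=2\|\mathbf A_{\Omega[\eta]}^{-1}\|\,(1+C\|(u,v)\|)+\frac{1+\|\mathbf A_{\Omega[\eta]}^{-1}\|\,\|\mathbf A\|}{m[\eta]}\,c_{(u,v)}.$$
   Context: Weighted $\ell^1$ norm: $\|h\|_{1,\kappa}=\sum_{\lambda\in\Lambda}\kappa_\lambda|\langle\phi_\lambda,h\rangle|\in[0,\infty]$ for $h\in\mathbb H$. Subdifferential: $\xi\in\partial\mathcal F(z_\star)$ iff $\mathcal F(z)\ge\mathcal F(z_\star)+\langle\xi,z-z_\star\rangle$ for all $z$. Bregman distance: for $\xi\in\partial\mathcal F(z_\star)$, $\mathcal D^{\mathcal F}_\xi(z,z_\star)=\mathcal F(z)-\mathcal F(z_\star)-\langle\xi,z-z_\star\rangle$. For $\eta=\sum_\lambda\eta_\lambda\phi_\lambda\in\partial\|\cdot\|_{1,\kappa}(h_\star)$ (which forces $|\eta_\lambda|\le\kappa_\lambda$ for all $\lambda$), set $\Omega[\eta]=\{\lambda\in\Lambda: |\eta_\lambda|=\kappa_\lambda\}$ (a finite set) and $m[\eta]=\min\{\kappa_\lambda-|\eta_\lambda|:\lambda\notin\Omega[\eta]\}>0$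 (with the term involving $1/m[\eta]$ read as $0$ if $\Lambda=\Omega[\eta]$). For finite $\Omega\subseteq\Lambda$: $\mathbb H_\Omega=\operatorname{span}\{\phi_\lambda:\lambda\in\Omega\}$, $\mathbf A_\Omega=\mathbf A|_{\mathbb H_\Omega}\colon\mathbb H_\Omega\to\mathbb Y$, and when $\mathbf A_\Omega$ is injective, $\|\mathbf A_\Omega^{-1}\|$ is the operator norm of its inverse $\operatorname{ran}(\mathbf A_\Omega)\to\mathbb H_\Omega$. *)

From HB Require Import structures.
From mathcomp Require Import all_boot all_order all_algebra.
From mathcomp Require Import all_classical all_reals all_analysis.
Set Implicit Arguments. Unset Strict Implicit. Unset Printing Implicit Defensive.
Import Order.TTheory GRing.Theory Num.Theory.
Import numFieldNormedType.Exports.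
Local Open Scope classical_set_scope.
Local Open Scope ring_scope.

Section Defs.
Variable R : realType.

Definition inner_product_of (V : normedModType R) (ip : V -> V -> R) : Prop :=
  (forall x y, ip x y = ip y x) /\
  (forall (a : R) (x y z : V), ip (a *: x + y) z = a * ip x z + ip y z) /\
  (forall x, ip x x = `|x| ^+ 2).

Definition separable_hilbert (V : completeNormedModType R) (ip : V -> V -> R) : Prop :=
  inner_product_of ip /\ exists D : set V, countable D /\ closure D = setT.

Definition is_adjoint (V U : normedModType R) (ipV : V -> V -> R) (ipU : U -> U -> R)
  (W : V -> U) (Wadj : U -> V) : Prop :=
  forall x u, ipV x (Wadj u) = ipU (W x) u.

Definition bounded_linear (V U : normedModType R) (W : {linear V -> U}) : Prop :=
  continuous W.

Definition opnorm (V U : normedModType R) (W : V -> U) : R :=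
  sup [set `|W h| | h in [set h : V | `|h| <= 1]].

Definition orthonormal_basis (Lam : choiceType) (H : normedModType R)
  (ip : H -> H -> R) (phi : Lam -> H) : Prop :=
  (forall l l', ip (phi l) (phi l') = (l == l')%:R) /\
  (forall h, (forall l, ip (phi l) h = 0) -> h = 0).

Definition wl1 (Lam : choiceType) (H : normedModType R) (ip : H -> H -> R)
  (phi : Lam -> H) (kappa : Lam -> R) (h : H) : \bar R :=
  \esum_(l in [set: Lam]) (kappa l * `|ip (phi l) h|)%:E.

Definition subdiff (V : normedModType R) (ip : V -> V -> R) (F : V -> \bar R)
  (z0 xi : V) : Prop :=
  forall z, (F z >= F z0 + (ip xi (z - z0)%R)%:E)%E.

Definition bregman (V : normedModType R) (ip : V -> V -> R) (F : V -> \bar R)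
  (xi z z0 : V) : \bar R :=
  (F z - F z0 - (ip xi (z - z0)%R)%:E)%E.

Definition proper_fun (V : Type) (F : V -> \bar R) : Prop :=
  (forall x, (0 <= F x)%E) /\ exists x, (F x < +oo)%E.

Definition convex_fun (V : normedModType R) (F : V -> \bar R) : Prop :=
  forall (x y : V) (t : R), 0 <= t <= 1 ->
    (F (t *: x + (1 - t) *: y)%R <= t%:E * F x + (1 - t)%:E * F y)%E.

(* closedness for the weak topology of the Hilbert space (V, ip): basic weak
   neighbourhoods are {z | forall e in s, |ip (z - x) e| < eps} *)
Definition weakly_closed (V : normedModType R) (ip : V -> V -> R) (S : set V) : Prop :=
  forall x, ~ S x -> exists (s : seq V) (eps : R), 0 < eps /\
    forall z, (forall e, e \in s -> `|ip (z - x) e| < eps) -> ~ S z.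

Definition weakly_lsc (V : normedModType R) (ip : V -> V -> R) (F : V -> \bar R) : Prop :=
  forall c : R, weakly_closed ip [set x | (F x <= c%:E)%E].

Definition Omega (Lam : choiceType) (H : normedModType R) (ip : H -> H -> R)
  (phi : Lam -> H) (kappa : Lam -> R) (eta : H) : set Lam :=
  [set l | `|ip (phi l) eta| = kappa l].

Definition mgap (Lam : choiceType) (H : normedModType R) (ip : H -> H -> R)
  (phi : Lam -> H) (kappa : Lam -> R) (eta : H) : R :=
  inf [set kappa l - `|ip (phi l) eta| | l in ~` Omega ip phi kappa eta].

Definition spanH (Lam : choiceType) (H : normedModType R) (phi : Lam -> H)
  (Om : set Lam) : set H :=
  [set h | exists (s : seq Lam) (c : Lam -> R),
     (forall l, l \in s -> Om l) /\ h = \sum_(l <- s) c l *: phi l].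

Definition injective_on (H Y : normedModType R) (A : H -> Y) (S : set H) : Prop :=
  forall h h', S h -> S h' -> A h = A h' -> h = h'.

(* operator norm of the inverse ran(A_Om) -> H_Om of the injective A_Om *)
Definition inv_opnorm (H Y : normedModType R) (A : H -> Y) (S : set H) : R :=
  sup [set `|h| | h in [set h | S h /\ `|A h| <= 1]].

End Defs.

(* Comparing the Tikhonov functional at the minimiser with its value at the exact
   solution (xs, hs) and inserting the source conditions through the adjoints bounds
   the sum of the two Bregman distances by c delta, and the residual A h - y^delta by
   O(delta), by completing squares.  The Bregman distance of the weighted l1 norm splits
   into nonnegative coordinate terms; off the finite set Omega[eta] each coordinate of
   h - hs is controlled by its term with constant 1 / m[eta], which bounds the norm of
   that part of h - hs through its basis expansion, while on Omega[eta] injectivity of A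
   on the finite-dimensional H_Omega turns the residual bound into a bound on the
   remaining component. *)

From Pilot Require Import Defs.
From HB Require Import structures.
From mathcomp Require Import all_boot all_order all_algebra.
From mathcomp Require Import all_classical all_reals all_analysis.
From mathcomp Require Import ring lra zify.
Import Order.TTheory GRing.Theory Num.Theory.
Import numFieldNormedType.Exports.
Local Open Scope classical_set_scope.
Local Open Scope ring_scope.

Set Implicit Arguments. Unset Strict Implicit.

Section InnerProduct.
Variables (R : realType) (V : normedModType R) (ip : V -> V -> R).
Hypothesis hip : inner_product_of ip.

Lemma ipC x y : ip x y = ip y x.
Proof. by case: hip. Qed.

Lemma ipDZl a x y z : ip (a *: x + y) z = a * ip x z + ip y z.
Proof. by case: hip => _ []. Qed.

Lemma ip_norm x : ip x x = `|x| ^+ 2.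
Proof. by case: hip => _ []. Qed.

Lemma ipDl x y z : ip (x + y) z = ip x z + ip y z.
Proof. by rewrite -[x]scale1r ipDZl mul1r scale1r. Qed.

Lemma ip0l z : ip 0 z = 0.
Proof.
by have := ipDl 0 0 z; rewrite addr0 => /eqP; rewrite -subr_eq subrr eq_sym => /eqP.
Qed.

Lemma ipZl a x z : ip (a *: x) z = a * ip x z.
Proof. by rewrite -[a *: x]addr0 ipDZl ip0l addr0. Qed.

Lemma ipNl x z : ip (- x) z = - ip x z.
Proof. by rewrite -scaleN1r ipZl mulN1r. Qed.

Lemma ipBl x y z : ip (x - y) z = ip x z - ip y z.
Proof. by rewrite ipDl ipNl. Qed.

Lemma ipDr x y z : ip z (x + y) = ip z x + ip z y.
Proof. by rewrite ipC ipDl ipC [ip y z]ipC. Qed.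

Lemma ipZr a x z : ip z (a *: x) = a * ip z x.
Proof. by rewrite ipC ipZl ipC. Qed.

Lemma ip0r z : ip z 0 = 0.
Proof. by rewrite ipC ip0l. Qed.

Lemma ipBr x y z : ip z (x - y) = ip z x - ip z y.
Proof. by rewrite ipC ipBl ipC [ip y z]ipC. Qed.

Lemma ip_sumr (I : Type) (s : seq I) (F : I -> V) z :
  ip z (\sum_(i <- s) F i) = \sum_(i <- s) ip z (F i).
Proof.
elim: s => [|i s IH]; first by rewrite !big_nil ip0r.
by rewrite !big_cons ipDr IH.
Qed.

Lemma ip_suml (I : Type) (s : seq I) (F : I -> V) z :
  ip (\sum_(i <- s) F i) z = \sum_(i <- s) ip (F i) z.
Proof. by rewrite ipC ip_sumr; apply: eq_bigr => i _; rewrite ipC. Qed.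

Lemma ip_self_eq0 x : ip x x = 0 -> x = 0.
Proof. by rewrite ip_norm => /eqP; rewrite expf_eq0 /= normr_eq0 => /eqP. Qed.

Lemma normB_sq x y : `|x - y| ^+ 2 = `|x| ^+ 2 - 2 * ip x y + `|y| ^+ 2.
Proof. by rewrite -!ip_norm ipBl !ipBr [ip y x]ipC; ring. Qed.

Lemma cauchy_schwarz x y : `|ip x y| <= `|x| * `|y|.
Proof.
have [->|y0] := eqVneq y 0; first by rewrite ip0r !normr0 mulr0.
set b := ip x y; set c := `|y| ^+ 2.
have c0 : 0 < c by rewrite exprn_gt0 // normr_gt0.
(* the projection residue [x - (b / c) y] has norm^2 [|x|^2 - b^2 / c] *)
have : 0 <= `|x - (b / c) *: y| ^+ 2 by rewrite sqr_ge0.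
rewrite normB_sq ipZr normrZ exprMn real_normK ?num_real // -/b -/c.
have -> : `|x| ^+ 2 - 2 * (b / c * b) + (b / c) ^+ 2 * c = `|x| ^+ 2 - b ^+ 2 / c.
  by field; rewrite gt_eqF.
rewrite subr_ge0 ler_pdivrMr // => hb.
have : `|b| ^+ 2 <= (`|x| * `|y|) ^+ 2 by rewrite real_normK ?num_real // exprMn.
by rewrite ler_pXn2r // ?nnegrE ?mulr_ge0.
Qed.

End InnerProduct.

Lemma uniq_enum_of_size_bound (T : eqType) (P : T -> Prop) (M : nat) :
  (forall s, uniq s -> (forall x, x \in s -> P x) -> (size s <= M)%N) ->
  exists s, uniq s /\ forall x, P x <-> x \in s.
Proof.
move=> hM.
suff : forall k s, uniq s -> (forall x, x \in s -> P x) -> (M - size s <= k)%N ->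
    exists s, uniq s /\ forall x, P x <-> x \in s.
  by move=> h; apply: (h M [::]) => //; rewrite subn0.
elim=> [|k IH] s us sP hk.
  exists s; split => // x; split => [Px|]; last exact: sP.
  apply/negPn/negP => nxs.
  have : (size (x :: s) <= M)%N.
    apply: hM; first by rewrite /= nxs us.
    by move=> y; rewrite in_cons => /orP[/eqP->|/sP].
  by move: hk => /=; lia.
have [cov|/existsNP[x /not_implyP[Px /negP nxs]]] :=
  pselect (forall x, P x -> x \in s).
  by exists s; split => // x; split; [exact: cov|exact: sP].
apply: (IH (x :: s)); first by rewrite /= nxs.
  by move=> y; rewrite in_cons => /orP[/eqP->|/sP].
by move: hk => /=; lia.
Qed.

Lemma countable_exhaustion (T : choiceType) : countable [set: T] ->
  exists (f : T -> nat) (S : nat -> seq T),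
    forall n, uniq (S n) /\ forall x, (f x < n)%N <-> x \in S n.
Proof.
move=> /countable_injP[f finj]; exists f.
suff /choice[S hS] : forall n, exists s, uniq s /\ forall x, (f x < n)%N <-> x \in s.
  by exists S.
move=> n; apply: (@uniq_enum_of_size_bound _ _ n) => s us sP.
rewrite -(size_map f) -[X in (_ <= X)%N](size_iota 0).
apply: uniq_leq_size.
  by rewrite map_inj_in_uniq // => x y _ _; apply: finj; rewrite in_setT.
by move=> k /mapP[x xs ->]; rewrite mem_iota add0n; apply: sP.
Qed.

Section Orthonormal.
Variables (R : realType) (H : normedModType R) (ip : H -> H -> R).
Hypothesis hip : inner_product_of ip.
Variables (Lam : choiceType) (phi : Lam -> H).
Hypothesis hon : forall l l', ip (phi l) (phi l') = (l == l')%:R.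

Definition lin_comb (s : seq Lam) (c : Lam -> R) : H := \sum_(l <- s) c l *: phi l.

Lemma ip_lin_comb s c l : uniq s ->
  ip (phi l) (lin_comb s c) = if l \in s then c l else 0.
Proof.
rewrite /lin_comb; elim: s => [|b s IH] /=; first by rewrite big_nil ip0r.
move=> /andP[nbs us]; rewrite big_cons ipDr // ipZr // hon // IH // in_cons.
have [->|nlb] := eqVneq l b; first by rewrite (negbTE nbs) mulr1 addr0.
by rewrite mulr0 add0r.
Qed.

Lemma norm_phi l : `|phi l| = 1.
Proof. by apply/eqP; rewrite -sqrp_eq1 // -(ip_norm hip) hon eqxx. Qed.

Lemma norm_lin_comb_le s c : `|lin_comb s c| <= \sum_(l <- s) `|c l|.
Proof.
apply: le_trans (ler_norm_sum _ _ _) _.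
by apply: ler_sum => l _; rewrite normrZ norm_phi mulr1.
Qed.

Lemma bessel s y : uniq s -> \sum_(l <- s) ip (phi l) y ^+ 2 <= `|y| ^+ 2.
Proof.
move=> us; set c := fun l => ip (phi l) y.
have cy : ip y (lin_comb s c) = \sum_(l <- s) c l ^+ 2.
  by rewrite (ip_sumr hip); apply: eq_bigr => l _; rewrite ipZr // (ipC hip) expr2.
have cc : `|lin_comb s c| ^+ 2 = \sum_(l <- s) c l ^+ 2.
  rewrite -(ip_norm hip) {1}/lin_comb (ip_suml hip) !big_seq.
  by apply: eq_bigr => l ls; rewrite ipZl // ip_lin_comb // ls expr2.
have := sqr_ge0 `|y - lin_comb s c|.
by rewrite (normB_sq hip) cy cc; lra.
Qed.

Lemma large_coefs_finite y (e : R) : 0 < e ->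
  exists s, uniq s /\ forall l, e <= `|ip (phi l) y| <-> l \in s.
Proof.
move=> e0; apply: (@uniq_enum_of_size_bound _ _ (Num.truncn (`|y| ^+ 2 / e ^+ 2))).
move=> s us sP.
have e2 : 0 < e ^+ 2 by rewrite exprn_gt0.
have : e ^+ 2 *+ size s <= `|y| ^+ 2.
  apply: le_trans (@bessel s y us); rewrite -[size s]count_predT -iter_addr_0.
  rewrite -big_const_seq big_seq [leRHS]big_seq; apply: ler_sum => l /sP hl.
  by rewrite -[leRHS]real_normK ?num_real // lerXn2r ?nnegrE // ltW.
rewrite -mulr_natl -ler_pdivlMr // => hs.
rewrite -ltnS -(ltr_nat R); apply: le_lt_trans hs _.
by rewrite truncnS_gt.
Qed.

End Orthonormal.

Section Exhaustion.
Variables (R : realType) (H : completeNormedModType R) (ip : H -> H -> R).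
Hypothesis hip : inner_product_of ip.
Variables (Lam : choiceType) (phi : Lam -> H).
Hypothesis hon : forall l l', ip (phi l) (phi l') = (l == l')%:R.
Variables (f : Lam -> nat) (S : nat -> seq Lam).
Hypothesis hS : forall n, uniq (S n) /\ forall l, (f l < n)%N <-> l \in S n.

Lemma sum_exhaustion_split (V : nmodType) (F : Lam -> V) m n : (m <= n)%N ->
  \sum_(l <- S n) F l = \sum_(l <- S m) F l + \sum_(l <- S n | ~~ (f l < m)%N) F l.
Proof.
move=> mn; rewrite (bigID (fun l => (f l < m)%N)) /=; congr (_ + _).
have [[un hn] [um hm]] := (hS n, hS m).
rewrite -big_filter; apply/perm_big/uniq_perm => //; first exact: filter_uniq.
move=> l; rewrite mem_filter; apply/andP/idP => [[/hm //]|/hm lm].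
by split => //; apply/hn; lia.
Qed.

Lemma lin_comb_exhaustion_lim (c : Lam -> R) M :
  (forall n, \sum_(l <- S n) `|c l| <= M) ->
  exists z, (forall l, ip (phi l) z = c l) /\ `|z| <= M.
Proof.
move=> hM; pose x n := lin_comb phi (S n) c; pose sg n := \sum_(l <- S n) `|c l|.
have x_diff m n : (m <= n)%N -> `|x n - x m| <= sg n - sg m.
  move=> mn; rewrite /x /sg /lin_comb !(sum_exhaustion_split _ mn).
  rewrite [X in `|X|]addrAC [leRHS]addrAC !subrr !add0r.
  apply: le_trans (ler_norm_sum _ _ _) _.
  by apply: ler_sum => l _; rewrite normrZ (norm_phi hip hon) mulr1.
have hsup : has_sup (range sg).
  by split; [exists (sg 0%N), 0%N | exists M => _ [n _ <-]; apply: hM].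
have : cauchy (x @ \oo).
  apply: cauchy_exP => e e0.
  have [_ [N _ <-] hN] := sup_adherent e0 hsup.
  exists (x N), N => // n /= Nn; rewrite -ball_normE /= distrC.
  apply: le_lt_trans (x_diff _ _ Nn) _.
  have : sg n <= sup (range sg) by apply: sup_upper_bound => //; exists n.
  lra.
move=> /cauchy_cvg /cvgrPdist_lt xz; set z := lim (x @ \oo).
have near_z e : 0 < e -> exists N, forall n, (N <= n)%N -> `|z - x n| < e.
  by move=> e0; have [N _ hN] := xz e e0; exists N => n Nn; apply: hN.
exists z; split => [l|].
  apply/eqP; rewrite -subr_eq0 -normr_le0; apply/ler_addgt0Pr => e e0.
  have [N hN] := near_z e e0; pose n := maxn N (f l).+1.
  have <- : ip (phi l) (x n) = c l.
    have [un /(_ l) [hn _]] := hS n.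
    by rewrite (ip_lin_comb hip hon) // hn // /n; lia.
  rewrite add0r -(ipBr hip); apply: le_trans (cauchy_schwarz hip _ _) _.
  by rewrite (norm_phi hip hon) mul1r ltW // hN // leq_maxl.
apply/ler_addgt0Pr => e e0; have [N hN] := near_z e e0.
have : `|x N| <= sg N := norm_lin_comb_le hip hon _ _.
have : sg N <= M := hM N.
have := hN N (leqnn N).
have : `|z| <= `|z - x N| + `|x N| by rewrite -[X in `|X| <= _](subrK (x N)) ler_normD.
lra.
Qed.

End Exhaustion.

Lemma norm_le_sum_abs_coef (R : realType) (H : completeNormedModType R)
    (ip : H -> H -> R) (Lam : choiceType) (phi : Lam -> H) :
  inner_product_of ip -> orthonormal_basis ip phi -> countable [set: Lam] ->
  forall y M, (forall s, uniq s -> \sum_(l <- s) `|ip (phi l) y| <= M) -> `|y| <= M.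
Proof.
move=> hip [hon hcomp] /countable_exhaustion[f [S hS]] y M hM.
have [z [cz zM]] := lin_comb_exhaustion_lim hip hon hS (fun n => hM _ (hS n).1).
suff -> : y = z by [].
by apply/eqP; rewrite -subr_eq0; apply/eqP/hcomp => l; rewrite (ipBr hip) cz subrr.
Qed.

Lemma lin_comb_bounded_below (R : realType) (H Y : normedModType R)
    (ipY : Y -> Y -> R) (A : {linear H -> Y}) (k : nat) (e : 'I_k -> H) :
  inner_product_of ipY ->
  (forall c : 'I_k -> R, A (\sum_i c i *: e i) = 0 -> forall i, c i = 0) ->
  exists K, 0 <= K /\
    forall c : 'I_k -> R, `|\sum_i c i *: e i| <= K * `|A (\sum_i c i *: e i)|.
Proof.
move=> hipY hinj; pose w i := A (e i).
have Ae (c : 'I_k -> R) : A (\sum_i c i *: e i) = \sum_i c i *: w i.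
  by rewrite linear_sum; apply: eq_bigr => i _; rewrite linearZ.
(* the coefficients are recovered from the Gram matrix [G] of the [A e_i] *)
pose G := \matrix_(i, j) ipY (w i) (w j) : 'M[R]_k.
have GE (cv : 'rV_k) j : (cv *m G) 0 j = ipY (\sum_i cv 0 i *: w i) (w j).
  by rewrite !mxE (ip_suml hipY); apply: eq_bigr => i _; rewrite mxE (ipZl hipY).
have Gfree (cv : 'rV_k) : cv *m G = 0 -> cv = 0.
  move=> cvG; apply/rowP => j; rewrite mxE; apply: (hinj (fun i => cv 0 i)).
  rewrite Ae; apply: (ip_self_eq0 hipY).
  rewrite (ip_sumr hipY) big1 // => i _.
  by rewrite (ipZr hipY) -GE cvG mxE mulr0.
have Gunit : G \in unitmx.
  rewrite -row_free_unit -kermx_eq0; apply/eqP/row_matrixP => i.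
  by rewrite row0; apply: Gfree; rewrite -row_mul mulmx_ker row0.
pose Gi := invmx G; pose K i := \sum_j `|w j| * `|Gi j i|.
exists (\sum_i K i * `|e i|); split.
  by apply: sumr_ge0 => i _; rewrite mulr_ge0 ?sumr_ge0 // => j _; rewrite mulr_ge0.
move=> c; set Ac := A _; pose cv := \row_i c i.
have ci i : `|c i| <= K i * `|Ac|.
  have -> : c i = (cv *m G *m Gi) 0 i by rewrite mulmxK // mxE.
  rewrite mxE /K mulr_suml; apply: le_trans (ler_norm_sum _ _ _) _.
  apply: ler_sum => j _; rewrite normrM mulrAC ler_wpM2r // GE mulrC.
  have -> : \sum_i cv 0 i *: w i = Ac.
    by rewrite /Ac Ae; apply: eq_bigr => i' _; rewrite mxE.
  exact: cauchy_schwarz.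
rewrite mulr_suml; apply: le_trans (ler_norm_sum _ _ _) _; apply: ler_sum => i _.
by rewrite normrZ mulrAC ler_wpM2r.
Qed.

Section SpanInverse.
Variables (R : realType) (H Y : normedModType R) (ip : H -> H -> R) (ipY : Y -> Y -> R).
Hypotheses (hip : inner_product_of ip) (hipY : inner_product_of ipY).
Variables (Lam : choiceType) (phi : Lam -> H).
Hypothesis hon : forall l l', ip (phi l) (phi l') = (l == l')%:R.
Variables (Om : set Lam) (s0 : seq Lam).
Hypotheses (us0 : uniq s0) (hs0 : forall l, Om l <-> l \in s0).

Lemma spanH0 : spanH phi Om 0.
Proof. by exists [::], (fun=> 0); split => //; rewrite big_nil. Qed.

Lemma spanHZ r g : spanH phi Om g -> spanH phi Om (r *: g).
Proof.
move=> [s [c [sOm ->]]]; exists s, (fun l => r * c l); split => //.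
by rewrite scaler_sumr; apply: eq_bigr => l _; rewrite scalerA.
Qed.

Lemma spanH_lin_comb g : spanH phi Om g -> g = lin_comb phi s0 (fun l => ip (phi l) g).
Proof.
move=> [s [c [sOm ->]]]; set g0 := \sum_(l <- s) _.
pose d := g0 - lin_comb phi s0 (fun l => ip (phi l) g0).
have orth l r : l \in s0 -> ip d (r *: phi l) = 0.
  move=> ls; rewrite (ipZr hip) (ipC hip) (ipBr hip) (ip_lin_comb hip hon) //.
  by rewrite ls subrr mulr0.
apply/eqP; rewrite -subr_eq0 -/d; apply/eqP/(ip_self_eq0 hip).
rewrite {2}/d (ipBr hip) {2}/g0 /lin_comb !(ip_sumr hip).
rewrite big_seq big1 => [|l ls]; last by apply/orth/hs0/sOm.
by rewrite big_seq big1 ?subr0 // => l; apply: orth.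
Qed.

Variable (A : {linear H -> Y}).
Hypothesis hinj : injective_on A (spanH phi Om).

Lemma spanH_bounded_below :
  exists K, 0 <= K /\ forall g, spanH phi Om g -> `|g| <= K * `|A g|.
Proof.
pose t := in_tuple s0; pose e i := phi (tnth t i).
have tinj : injective (tnth t) by apply/tuple_uniqP.
have Ae0 (c : 'I_(size s0) -> R) : A (\sum_i c i *: e i) = 0 -> forall i, c i = 0.
  move=> hc; pose c' l := oapp c 0 (insub (index l s0) : option 'I_(size s0)).
  have ve : \sum_i c i *: e i = lin_comb phi s0 c'.
    rewrite /lin_comb [RHS]big_tnth; apply: eq_bigr => i _; rewrite /c' /e.
    by rewrite (tnth_nth (tnth t i)) index_uniq // valK.
  have v0 : \sum_i c i *: e i = 0.
    apply: hinj; rewrite ?hc ?linear0 //; last exact: spanH0.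
    by rewrite ve; exists s0, c'; split => // l /hs0.
  move=> i; have := congr1 (ip (e i)) v0.
  rewrite (ip0r hip) (ip_sumr hip) (bigD1 i) //= big1 => [|j ji]; last first.
    by rewrite (ipZr hip) hon (inj_eq tinj) eq_sym (negbTE ji) mulr0.
  by rewrite (ipZr hip) hon eqxx mulr1 addr0.
have [K [K0 hK]] := lin_comb_bounded_below hipY Ae0.
exists K; split => // g /spanH_lin_comb ->.
by rewrite /lin_comb big_tnth; apply: hK.
Qed.

Let inv_set := [set `|h| | h in [set h | spanH phi Om h /\ `|A h| <= 1]].

Lemma inv_set_has_sup : has_sup inv_set.
Proof.
have [K [K0 hK]] := spanH_bounded_below.
split; first by exists 0, 0; rewrite /= ?linear0 ?normr0 //; split => //; exact: spanH0.
exists K => _ [h [sh Ah] <-]; apply: le_trans (hK _ sh) _.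
by rewrite -[leRHS]mulr1 ler_wpM2l.
Qed.

Lemma inv_opnorm_ge0 : 0 <= inv_opnorm A (spanH phi Om).
Proof.
apply: (sup_upper_bound inv_set_has_sup).
by exists 0; rewrite /= ?linear0 ?normr0 //; split => //; exact: spanH0.
Qed.

Lemma norm_le_inv_opnorm g : spanH phi Om g -> `|g| <= inv_opnorm A (spanH phi Om) * `|A g|.
Proof.
move=> sg; have [Ag0|Ag0] := eqVneq (A g) 0.
  have -> : g = 0 by apply: hinj; rewrite ?linear0 //; exact: spanH0.
  by rewrite normr0 linear0 normr0 mulr0.
have nAg : 0 < `|A g| by rewrite normr_gt0.
(* [g / |A g|] lies in the unit ball of [A] on the span *)
have := sup_upper_bound inv_set_has_sup (ex_intro2 _ _ (`|A g|^-1 *: g) _ erefl).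
rewrite normrZ normrV ?unitfE ?gt_eqF // normr_id -ler_pdivrMr // mulrC; apply.
split; first exact: spanHZ.
by rewrite linearZ normrZ normrV ?unitfE ?gt_eqF // normr_id mulVf ?gt_eqF.
Qed.

End SpanInverse.

Section OperatorNorm.
Variables (R : realType) (V U : normedModType R) (A : {linear V -> U}).
Hypothesis hA : continuous A.

Lemma opnorm_has_sup : has_sup [set `|A h| | h in [set h : V | `|h| <= 1]].
Proof.
have [M [_ hM]] := (linear_boundedP A).1 ((linear_bounded_continuous A).2 hA).
have hr y : `|A y| <= (`|M| + 1) * `|y| by apply: hM; have := ler_norm M; lra.
split; first by exists `|A 0|, 0; rewrite //= normr0.
exists (`|M| + 1) => _ [h /= h1 <-]; apply: le_trans (hr h) _.
by rewrite -[leRHS]mulr1 ler_wpM2l // addr_ge0.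
Qed.

Lemma opnorm_ge0 : 0 <= opnorm A.
Proof.
apply: (sup_upper_bound opnorm_has_sup).
by exists 0; rewrite /= ?linear0 normr0.
Qed.

Lemma norm_le_opnorm x : `|A x| <= opnorm A * `|x|.
Proof.
have [->|x0] := eqVneq x 0; first by rewrite linear0 !normr0 mulr0.
have nx : 0 < `|x| by rewrite normr_gt0.
have := sup_upper_bound opnorm_has_sup (ex_intro2 _ _ (`|x|^-1 *: x) _ erefl).
rewrite linearZ normrZ normrV ?unitfE ?gt_eqF // normr_id -ler_pdivrMr // mulrC; apply.
by rewrite /= normrZ normrV ?unitfE ?gt_eqF // normr_id mulVf ?gt_eqF.
Qed.

End OperatorNorm.

Lemma abs_subgradient (R : realType) (k e b : R) : 0 <= k ->
  (forall t, e * (t - b) <= k * `|t| - k * `|b|) -> `|e| <= k /\ k * `|b| <= e * b.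
Proof.
move=> k0 h; split; last by have := h 0; rewrite normr0 mulr0; lra.
have := h (b + 1); rewrite addrAC subrr add0r mulr1.
have := h (b - 1); rewrite addrAC subrr add0r mulrN1.
have := ler_wpM2l k0 (ler_normD b 1); have := ler_wpM2l k0 (ler_normB b 1).
rewrite normr1 mulrDr mulr1.
by case: (lerP 0 e) => he; [rewrite (ger0_norm he) | rewrite (ltr0_norm he)]; lra.
Qed.

Lemma subdiff_fin (R : realType) (V : normedModType R) (ip : V -> V -> R)
    (F : V -> \bar R) z0 xi :
  (forall z, (0 <= F z)%E) -> (exists z, (F z < +oo)%E) -> subdiff ip F z0 xi ->
  exists r, F z0 = r%:E.
Proof.
move=> F0 [z Fz] /(_ z); move: (F0 z0) Fz.
by case: (F z0) => [r| |] // _; [exists r | case: (F z)].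
Qed.

Section WeightedL1.
Variables (R : realType) (H : normedModType R) (ip : H -> H -> R).
Hypothesis hip : inner_product_of ip.
Variables (Lam : choiceType) (phi : Lam -> H).
Hypothesis hon : forall l l', ip (phi l) (phi l') = (l == l')%:R.
Variable kappa : Lam -> R.
Hypothesis kappa_ge0 : forall l, 0 <= kappa l.

Local Notation wl1 := (wl1 ip phi kappa).
Local Notation cf l y := (ip (phi l) y).

Lemma wl1_ge0 h : (0 <= wl1 h)%E.
Proof. by apply: esum_ge0 => l _; rewrite lee_fin mulr_ge0. Qed.

Lemma wl1_0 : wl1 0 = 0%E.
Proof. by apply: esum1 => l _; rewrite ip0r // normr0 mulr0. Qed.

Definition wl1_tail (s : seq Lam) (y : H) : \bar R :=
  \esum_(l in [set l | l \notin s]) (kappa l * `|cf l y|)%:E.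

Lemma wl1_tail_ge0 s y : (0 <= wl1_tail s y)%E.
Proof. by apply: esum_ge0 => l _; rewrite lee_fin mulr_ge0. Qed.

Lemma eq_wl1_tail s y y' :
  (forall l, l \notin s -> cf l y = cf l y') -> wl1_tail s y = wl1_tail s y'.
Proof. by move=> e; apply: eq_esum => l /= ls; rewrite e. Qed.

Lemma wl1_split s y : uniq s ->
  wl1 y = ((\sum_(l <- s) kappa l * `|cf l y|)%:E + wl1_tail s y)%E.
Proof.
elim: s => [|b s IH] /=.
  move=> _; rewrite big_nil add0e /wl1_tail /Defs.wl1; congr esum.
  by apply/seteqP; split => l.
move=> /andP[nbs us].
have tail_cons : wl1_tail s y = ((kappa b * `|cf b y|)%:E + wl1_tail (b :: s) y)%E.
  rewrite /wl1_tail (esumID [set b]); last by move=> l _; rewrite lee_fin mulr_ge0.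
  congr (_ + _)%E.
    have -> : [set l | l \notin s] `&` [set b] = [set b].
      by apply/seteqP; split => l /=; [case | move=> ->; split].
    by rewrite esum_set1 // lee_fin mulr_ge0.
  congr esum; apply/seteqP; split => l /=.
    by move=> [ls /eqP lb]; rewrite in_cons negb_or lb ls.
  by rewrite in_cons negb_or => /andP[/eqP lb ls]; split.
by rewrite IH // tail_cons big_cons EFinD addeCA addeA.
Qed.

Lemma wl1_change1 l y y' : (forall l', l' != l -> cf l' y = cf l' y') ->
  (wl1 y' + (kappa l * `|cf l y|)%:E = wl1 y + (kappa l * `|cf l y'|)%:E)%E.
Proof.
move=> e; rewrite !(@wl1_split [:: l]) // !big_seq1.
rewrite (@eq_wl1_tail [:: l] y' y) => [|l']; last by rewrite mem_seq1 => /e ->.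
by rewrite addeAC [RHS]addeAC; congr (_ + _)%E; exact: addeC.
Qed.

Variables (hs eta : H).
Hypothesis eta_subdiff : subdiff ip wl1 hs eta.

Lemma wl1_subdiff_fin : exists Ws, wl1 hs = Ws%:E.
Proof.
by apply: subdiff_fin eta_subdiff; [exact: wl1_ge0 | exists 0; rewrite wl1_0 ltry].
Qed.

Lemma subdiff_coef l :
  `|cf l eta| <= kappa l /\ kappa l * `|cf l hs| <= cf l eta * cf l hs.
Proof.
have [Ws hWs] := wl1_subdiff_fin.
apply: abs_subgradient (kappa_ge0 l) _ => t.
(* test the subgradient inequality against [hs] moved along [phi l] only *)
pose z := hs + (t - cf l hs) *: phi l.
have cz l' : cf l' z = cf l' hs + (t - cf l hs) * (l' == l)%:R.
  by rewrite (ipDr hip) (ipZr hip) hon eq_sym.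
have czl : cf l z = t by rewrite cz eqxx mulr1 addrC subrK.
have hz : (wl1 z + (kappa l * `|cf l hs|)%:E = (Ws + kappa l * `|t|)%:E)%E.
  rewrite -czl EFinD -hWs; apply: wl1_change1 => l' nl'.
  by rewrite cz (negbTE nl') mulr0 addr0.
have := eta_subdiff z; rewrite hWs.
have -> : z - hs = (t - cf l hs) *: phi l by rewrite /z addrC addKr.
rewrite (ipZr hip) (ipC hip eta).
case: (wl1 z) hz => [wz| |] //; rewrite -!EFinD lee_fin => -[hwz] h.
by rewrite mulrC; lra.
Qed.

Definition coef_bregman l h :=
  kappa l * `|cf l h| - kappa l * `|cf l hs| - cf l eta * (cf l h - cf l hs).

Lemma coef_bregman_ge0 l h : 0 <= coef_bregman l h.
Proof.
have [h1 h2] := subdiff_coef l.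
have := ler_norm (cf l eta * cf l h); rewrite normrM.
have : `|cf l eta| * `|cf l h| <= kappa l * `|cf l h| by rewrite ler_wpM2r.
by rewrite /coef_bregman; lra.
Qed.

Lemma coef_off_support l : `|cf l eta| < kappa l -> cf l hs = 0.
Proof.
move=> lt_eta; have [_ h2] := subdiff_coef l.
have := ler_norm (cf l eta * cf l hs); rewrite normrM.
have := normr_ge0 (cf l hs); rewrite le_eqVlt => /orP[|hs_gt0].
  by rewrite eq_sym normr_eq0 => /eqP.
have : `|cf l eta| * `|cf l hs| < kappa l * `|cf l hs| by rewrite ltr_pM2r.
lra.
Qed.

Lemma coef_bregman_off_support l h : `|cf l eta| < kappa l ->
  (kappa l - `|cf l eta|) * `|cf l h - cf l hs| <= coef_bregman l h.
Proof.
move=> lt_eta; rewrite /coef_bregman (coef_off_support lt_eta) subr0 normr0 mulr0 subr0.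
have := ler_norm (cf l eta * cf l h); rewrite normrM mulrBl; lra.
Qed.

Lemma sum_coef_bregman_le h Ws Wh s : wl1 hs = Ws%:E -> wl1 h = Wh%:E -> uniq s ->
  \sum_(l <- s) coef_bregman l h <= Wh - Ws - ip eta (h - hs).
Proof.
move=> hWs hWh us.
(* test the subgradient inequality against [h] with its coordinates in [s] reset to
   those of [hs] *)
pose c l := cf l (h - hs); pose z := h - lin_comb phi s c.
have cz l : cf l z = if l \in s then cf l hs else cf l h.
  by rewrite (ipBr hip) (ip_lin_comb hip hon) // /c (ipBr hip); case: ifP => _; ring.
have tail_z : wl1_tail s z = wl1_tail s h.
  by apply: eq_wl1_tail => l /negbTE ls; rewrite cz ls.
have tail_h : wl1_tail s h = (Wh - \sum_(l <- s) kappa l * `|cf l h|)%:E.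
  move: (wl1_split h us) (wl1_tail_ge0 s h); rewrite hWh.
  by case: (wl1_tail s h) => [r| |] //; rewrite -EFinD => -[->] _; congr _%:E; ring.
have := eta_subdiff z; rewrite (wl1_split z us) tail_z tail_h hWs -!EFinD lee_fin.
have -> : \sum_(l <- s) kappa l * `|cf l z| = \sum_(l <- s) kappa l * `|cf l hs|.
  by rewrite !big_seq; apply: eq_bigr => l ls; rewrite cz ls.
have -> : ip eta (z - hs) = ip eta (h - hs) - \sum_(l <- s) c l * cf l eta.
  rewrite /z addrAC (ipBr hip (h - hs)) /lin_comb (ip_sumr hip); congr (_ - _).
  by apply: eq_bigr => l _; rewrite (ipZr hip) (ipC hip).
have -> : \sum_(l <- s) coef_bregman l h = \sum_(l <- s) kappa l * `|cf l h|
    - \sum_(l <- s) kappa l * `|cf l hs| - \sum_(l <- s) c l * cf l eta.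
  by rewrite -!sumrB; apply: eq_bigr => l _; rewrite /coef_bregman /c (ipBr hip); ring.
lra.
Qed.

Local Notation Om := (Omega ip phi kappa eta).
Local Notation gap l := (kappa l - `|cf l eta|).

Variable a : R.
Hypotheses (a_gt0 : 0 < a) (kappa_ge : forall l, a <= kappa l).

Lemma Omega_finite : exists s0, uniq s0 /\ forall l, Om l <-> l \in s0.
Proof.
have [sa [_ hsa]] := large_coefs_finite hip hon eta a_gt0.
apply: (@uniq_enum_of_size_bound _ _ (size sa)) => s us sOm.
apply: uniq_leq_size => // l /sOm; rewrite /Omega /= => Oml.
by apply/hsa; rewrite Oml.
Qed.

Lemma gap_gt0 l : ~ Om l -> 0 < gap l.
Proof.
have [le_eta _] := subdiff_coef l.
by rewrite subr_gt0 lt_neqAle le_eta andbT => /eqP.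
Qed.

Lemma mgap_le l : ~ Om l -> mgap ip phi kappa eta <= gap l.
Proof.
move=> nOm; apply: ge_inf; last by exists l.
by exists 0 => _ [l' /gap_gt0 /ltW ? <-].
Qed.

Lemma mgap_gt0 : Om != setT -> 0 < mgap ip phi kappa eta.
Proof.
move=> /eqP OmT; have [l0 nOm0] : exists l0, ~ Om l0.
  by apply/existsNP => allOm; apply/OmT/seteqP; split => // l _; exact: allOm.
have [s0 [_ hs0]] := Omega_finite.
have a2 : 0 < a / 2 by rewrite divr_gt0.
(* coefficients of [eta] below [a / 2] leave a gap of at least [a / 2]; the others are
   finitely many *)
have [sa [_ hsa]] := large_coefs_finite hip hon eta a2.
pose mu := \big[Num.min/(a / 2)]_(l <- sa | l \notin s0) gap l.
have mu_gt0 : 0 < mu.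
  apply: (big_ind (fun x => 0 < x)) => // [x y x0 y0|l ls0]; first by rewrite lt_min x0.
  by apply: gap_gt0 => /hs0; apply/negP.
apply: lt_le_trans mu_gt0 _; apply: lb_le_inf; first by exists (gap l0), l0.
move=> _ [l nOm <-]; have ls0 : l \notin s0 by apply/negP => /hs0.
have [lsa|lsa] := boolP (l \in sa); first exact: (bigmin_inf_seq _ l _ _ _ lsa ls0).
apply: le_trans (bigmin_le_id _ _ _ _) _.
have : ~ (a / 2 <= `|cf l eta|) by move/hsa; apply/negP.
by move/negP; rewrite -ltNge; have := kappa_ge l; lra.
Qed.

End WeightedL1.

Lemma tikhonov_real_estimate (R : realType) (delta C nu nv p1 p2 q i1 i2 i3 D : R) :
  0 < delta -> 0 < C -> 0 <= nu -> 0 <= nv -> 0 <= q -> q <= delta ->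
  `|i1| <= nu * p1 -> `|i2| <= nv * p2 -> `|i3| <= nv * q -> 0 <= D ->
  p1 ^+ 2 / 2 + p2 ^+ 2 / 2 + C * delta * D + C * delta * (i1 + i2 + i3) <= q ^+ 2 / 2 ->
  D <= (1 + C * Num.sqrt (nu ^+ 2 + nv ^+ 2)) ^+ 2 / (2 * C) * delta /\
  p2 <= delta + 2 * (C * delta) * Num.sqrt (nu ^+ 2 + nv ^+ 2).
Proof.
move=> d0 C0 nu0 nv0 q0 qd h1 h2 h3 D0 hE; set n := Num.sqrt _.
have n0 : 0 <= n := sqrtr_ge0 _.
have n2 : n ^+ 2 = nu ^+ 2 + nv ^+ 2 by rewrite sqr_sqrtr // addr_ge0 ?sqr_ge0.
set al := C * delta in hE *; have al0 : 0 < al by rewrite mulr_gt0.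
have nvn : nv <= n by nra.
have oppr_le (x y : R) : `|x| <= y -> - x <= y.
  by move=> xy; apply: le_trans xy; have := ler_norm (- x); rewrite normrN.
have j1 : - (al * i1) <= al * (nu * p1) by rewrite -mulrN ler_pM2l // oppr_le.
have j2 : - (al * i2) <= al * (nv * p2) by rewrite -mulrN ler_pM2l // oppr_le.
have j3 : - (al * i3) <= al * (n * delta).
  by rewrite -mulrN ler_pM2l // oppr_le // (le_trans h3) //; nra.
(* completing the squares in [p1] and [p2] *)
have k1 : al * (nu * p1) - p1 ^+ 2 / 2 <= al ^+ 2 * nu ^+ 2 / 2.
  by have := sqr_ge0 (p1 - al * nu); nra.
have hq : q ^+ 2 <= delta ^+ 2 by nra.
have : al * D + (p2 - al * nv) ^+ 2 / 2 <= (delta + al * n) ^+ 2 / 2.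
  have -> : (delta + al * n) ^+ 2 = delta ^+ 2 + 2 * (al * (n * delta)) + al ^+ 2 * n ^+ 2.
    by ring.
  have : al ^+ 2 * n ^+ 2 = al ^+ 2 * nu ^+ 2 + al ^+ 2 * nv ^+ 2 by rewrite n2 mulrDr.
  have : al * (D + (i1 + i2 + i3)) = al * D + al * i1 + al * i2 + al * i3 by ring.
  have : (p2 - al * nv) ^+ 2 = p2 ^+ 2 - 2 * (al * (nv * p2)) + al ^+ 2 * nv ^+ 2 by ring.
  rewrite mulrDr in hE; lra.
move=> hsq; have hD : al * D <= (delta + al * n) ^+ 2 / 2.
  by have := sqr_ge0 (p2 - al * nv); lra.
have hp2 : `|p2 - al * nv| <= delta + al * n.
  have dn0 : 0 <= delta + al * n by have := mulr_ge0 (ltW al0) n0; lra.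
  rewrite -(@ler_pXn2r _ 2) ?nnegrE //= real_normK ?num_real //.
  by have := mulr_ge0 (ltW al0) D0; lra.
split.
  have -> : (1 + C * n) ^+ 2 / (2 * C) * delta = (delta + al * n) ^+ 2 / 2 / al.
    by rewrite /al; field; rewrite ?gt_eqF //; nra.
  by rewrite ler_pdivlMr // mulrC.
have := ler_norm (p2 - al * nv); have : al * nv <= al * n by rewrite ler_pM2l.
lra.
Qed.

Lemma fin_of_penalty_le (R : realType) (F P : \bar R) (r s al : R) : 0 < al ->
  (0 <= F)%E -> (0 <= P)%E -> (r%:E + al%:E * (F + P) <= s%:E)%E ->
  exists x y, F = x%:E /\ P = y%:E.
Proof.
move=> al0; have alpinf : (al%:E * +oo = +oo :> \bar R)%E by rewrite mulry gtr0_sg // mul1e.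
case: F => [x| |] //; case: P => [y| |] // _ _ /=; rewrite ?alpinf //.
by exists x, y.
Qed.

Lemma bregman_ge0 (R : realType) (V : normedModType R) (ip : V -> V -> R)
    (F : V -> \bar R) z0 xi r z :
  subdiff ip F z0 xi -> F z0 = r%:E -> (0 <= bregman ip F xi z z0)%E.
Proof.
move=> /(_ z); rewrite /bregman => + Fz0; rewrite Fz0.
case: (F z) => [t h|_|//]; last by change (0 <= +oo :> \bar R)%E; exact: leey.
change (0 <= (t - r - ip xi (z - z0))%:E)%E.
by rewrite lee_fin subr_ge0 lerBrDl -lee_fin EFinD.
Qed.

Lemma bregman_le_fin (R : realType) (V : normedModType R) (ip : V -> V -> R)
    (F : V -> \bar R) xi z z0 r D :
  (0 <= F z)%E -> F z0 = r%:E -> (bregman ip F xi z z0 <= D%:E)%E ->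
  exists t, F z = t%:E /\ t - r - ip xi (z - z0) <= D.
Proof.
rewrite /bregman => + ->; case: (F z) => [t _| |//] hD; last by [].
by exists t; split => //; rewrite -lee_fin; apply: le_trans hD; rewrite !EFinB.
Qed.

Section Tikhonov.
Variables (R : realType) (X H Y : normedModType R).
Variables (ipX : X -> X -> R) (ipH : H -> H -> R) (ipY : Y -> Y -> R).
Hypotheses (hipX : inner_product_of ipX) (hipH : inner_product_of ipH)
  (hipY : inner_product_of ipY).
Variables (W : {linear X -> H}) (A : {linear H -> Y}) (Wadj : H -> X) (Aadj : Y -> H).
Hypotheses (hWadj : is_adjoint ipX ipH W Wadj) (hAadj : is_adjoint ipH ipY A Aadj).
Variables (F : X -> \bar R) (P : H -> \bar R).
Hypotheses (F_ge0 : forall x, (0 <= F x)%E) (P_ge0 : forall h, (0 <= P h)%E).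
Variables (xs : X) (hs : H) (u : H) (v : Y) (Fs Ps : R).
Hypotheses (hsW : W xs = hs) (hFs : F xs = Fs%:E) (hPs : P hs = Ps%:E).
Hypotheses (u_subdiff : subdiff ipX F xs (Wadj u)) (v_subdiff : subdiff ipH P hs (Aadj v - u)).
Variables (C delta : R) (yd : Y).
Hypotheses (C_gt0 : 0 < C) (delta_gt0 : 0 < delta) (hyd : `|yd - A hs| <= delta).

Definition tikhonov x h : \bar R :=
  ((1 / 2 * `|W x - h| ^+ 2 + 1 / 2 * `|A h - yd| ^+ 2)%:E + (C * delta)%:E * (F x + P h))%E.

Lemma tikhonov_minimizer_estimate xa ha : (tikhonov xa ha <= tikhonov xs hs)%E ->
  (bregman ipX F (Wadj u) xa xs + bregman ipH P (Aadj v - u)%R ha hs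
     <= ((1 + C * Num.sqrt (`|u| ^+ 2 + `|v| ^+ 2)) ^+ 2 / (2 * C) * delta)%:E)%E /\
  `|A ha - yd| <= delta + 2 * (C * delta) * Num.sqrt (`|u| ^+ 2 + `|v| ^+ 2).
Proof.
have al0 : 0 < C * delta by rewrite mulr_gt0.
rewrite /tikhonov hsW subrr normr0 hFs hPs -EFinD => hB.
have [Fx [Ph [hFx hPh]]] := fin_of_penalty_le al0 (F_ge0 xa) (P_ge0 ha) hB.
rewrite hFx hPh -!EFinD lee_fin expr0n /= mulr0 add0r (distrC (A hs)) in hB.
have := u_subdiff xa; have := v_subdiff ha.
rewrite /bregman hFx hFs hPh hPs -!EFinD !lee_fin => hP hF.
(* the adjoints turn the two linear terms into pairings with the residuals *)
have lin_terms : ipX (Wadj u) (xa - xs) + ipH (Aadj v - u) (ha - hs) =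
    ipH u (W xa - ha) + ipY v (A ha - yd) + ipY v (yd - A hs).
  rewrite (ipC hipX) hWadj (ipBl hipH) (ipC hipH _ (ha - hs)) hAadj !linearB hsW.
  rewrite (ipC hipH (W xa - hs)) (ipC hipY (A ha - A hs)) !(ipBr hipH) !(ipBr hipY); ring.
apply: (tikhonov_real_estimate _ _ _ _ _ _ (cauchy_schwarz hipH u (W xa - ha))
  (cauchy_schwarz hipY v _) (cauchy_schwarz hipY v (yd - A hs))) => //; first lra.
by rewrite -lin_terms; lra.
Qed.

End Tikhonov.

Section Distance.
Variables (R : realType) (H : completeNormedModType R) (Y : normedModType R).
Variables (ipH : H -> H -> R) (ipY : Y -> Y -> R).
Hypotheses (hipH : inner_product_of ipH) (hipY : inner_product_of ipY).
Variables (Lam : choiceType) (phi : Lam -> H).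
Hypotheses (hphi : orthonormal_basis ipH phi) (hLam : countable [set: Lam]).
Variables (kappa : Lam -> R) (a : R).
Hypotheses (a_gt0 : 0 < a) (kappa_ge : forall l, a <= kappa l).
Variables (hs eta : H).
Hypothesis eta_subdiff : subdiff ipH (wl1 ipH phi kappa) hs eta.

Local Notation Om := (Omega ipH phi kappa eta).
Local Notation cf l y := (ipH (phi l) y).

Let hon := hphi.1.
Let kappa_ge0 l : 0 <= kappa l := le_trans (ltW a_gt0) (kappa_ge l).

Lemma norm_le_bregman_off_Omega y h D : Om != setT ->
  (bregman ipH (wl1 ipH phi kappa) eta h hs <= D%:E)%E ->
  (forall l, Om l -> cf l y = 0) -> (forall l, ~ Om l -> cf l y = cf l h - cf l hs) ->
  `|y| <= D / mgap ipH phi kappa eta.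
Proof.
move=> OmT hD yOm ynOm; have m0 := mgap_gt0 hipH hon kappa_ge0 eta_subdiff a_gt0 kappa_ge OmT.
have [Ws hWs] := wl1_subdiff_fin hipH kappa_ge0 eta_subdiff.
have [Wh [hWh hWhD]] := bregman_le_fin (wl1_ge0 ipH phi kappa_ge0 h) hWs hD.
apply: (norm_le_sum_abs_coef hipH hphi hLam) => s us.
pose T l := coef_bregman ipH phi kappa hs eta l h.
apply: (@le_trans _ _ (\sum_(l <- s) T l / mgap ipH phi kappa eta)).
  apply: ler_sum => l _; have [Oml|nOml] := pselect (Om l).
    rewrite yOm // normr0 divr_ge0 ?(ltW m0) //.
    exact: (coef_bregman_ge0 hipH hon kappa_ge0 eta_subdiff).
  have gap0 := gap_gt0 hipH hon kappa_ge0 eta_subdiff nOml.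
  rewrite ynOm // ler_pdivlMr // mulrC; apply: le_trans (coef_bregman_off_support
    hipH hon kappa_ge0 eta_subdiff h _); last by rewrite -subr_gt0.
  by rewrite ler_wpM2r // (mgap_le hipH hon kappa_ge0 eta_subdiff).
rewrite -mulr_suml ler_pM2r ?invr_gt0 //; apply: le_trans hWhD.
exact: (sum_coef_bregman_le hipH hon kappa_ge0 eta_subdiff hWs hWh us).
Qed.

Variable A : {linear H -> Y}.
Hypotheses (hA : continuous A) (hinj : injective_on A (spanH phi Om)).

Local Notation Ninv := (inv_opnorm A (spanH phi Om)).

Lemma norm_sub_le_of_bregman h D E :
  (bregman ipH (wl1 ipH phi kappa) eta h hs <= D%:E)%E -> `|A (h - hs)| <= E ->
  `|h - hs| <= Ninv * E
    + (if Om == setT then 0 else (1 + Ninv * opnorm A) / mgap ipH phi kappa eta * D).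
Proof.
move=> hD hE; have [s0 [us0 hs0]] := Omega_finite hipH hon eta a_gt0 kappa_ge.
pose Q := lin_comb phi s0 (fun l => cf l (h - hs)); pose r := h - hs - Q.
have cr l : cf l r = if l \in s0 then 0 else cf l h - cf l hs.
  rewrite (ipBr hipH) (ip_lin_comb hipH hon) // (ipBr hipH).
  by case: ifP => _; rewrite ?subrr ?subr0.
have hQ : `|Q| <= Ninv * `|A Q|.
  apply: (norm_le_inv_opnorm hipH hipY hon us0 hs0 hinj).
  by exists s0, (fun l => cf l (h - hs)); split => // l /hs0.
have N0 : 0 <= Ninv := inv_opnorm_ge0 hipH hipY hon us0 hs0 hinj.
have AQ : `|A Q| <= E + opnorm A * `|r|.
  have -> : A Q = A (h - hs) - A r by rewrite -linearB /r opprB addrC subrK.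
  by apply: le_trans (ler_normB _ _) _; apply: lerD => //; apply: norm_le_opnorm.
have hhs : `|h - hs| <= `|Q| + `|r| by rewrite -[X in `|X|](subrK Q) addrC ler_normD.
have NAQ := ler_wpM2l N0 AQ.
case: eqP => [OmT|/eqP OmT].
  have r0 : r = 0 by apply: hphi.2 => l; rewrite cr; have /hs0 -> : Om l by rewrite OmT.
  by move: hhs NAQ; rewrite r0 normr0 !mulr0 !addr0; lra.
have hr : `|r| <= D / mgap ipH phi kappa eta.
  apply: (norm_le_bregman_off_Omega OmT hD) => l; rewrite cr.
    by move=> /hs0 ->.
  by move=> nOm; case: ifP => // /hs0.
have := ler_wpM2l (addr_ge0 ler01 (mulr_ge0 N0 (opnorm_ge0 hA))) hr.
by rewrite mulrA; move: hhs NAQ hQ; rewrite mulrDr mulrDl mul1r; lra.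
Qed.

End Distance.

Unset Implicit Arguments.

Theorem mainTheorem1 (R : realType)
  (X H Y : completeNormedModType R)
  (ipX : X -> X -> R) (ipH : H -> H -> R) (ipY : Y -> Y -> R)
  (hX : separable_hilbert ipX) (hH : separable_hilbert ipH) (hY : separable_hilbert ipY)
  (W : {linear X -> H}) (A : {linear H -> Y})
  (hW : bounded_linear W) (hA : bounded_linear A)
  (Wadj : H -> X) (Aadj : Y -> H)
  (hWadj : is_adjoint ipX ipH W Wadj) (hAadj : is_adjoint ipH ipY A Aadj)
  (Rf : X -> \bar R)
  (hRp : proper_fun Rf) (hRc : convex_fun Rf) (hRl : weakly_lsc ipX Rf)
  (Lam : choiceType) (hLam : countable [set: Lam])
  (phi : Lam -> H) (hphi : orthonormal_basis ipH phi)
  (kappa : Lam -> R) (a : R) (ha : 0 < a) (hk : forall l, a <= kappa l)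
  (hdom : exists x : X, (Rf x + wl1 ipH phi kappa (W x) < +oo)%E)
  (xs : X) (hs : H) (ys : Y)
  (h11 : W xs = hs /\ A hs = ys)
  (u : H) (h12 : subdiff ipX Rf xs (Wadj u))
  (v : Y) (h13 : subdiff ipH (wl1 ipH phi kappa) hs (Aadj v - u))
  (h14 : injective_on A (spanH phi (Omega ipH phi kappa (Aadj v - u))))
  (C : R) (hC : 0 < C) :
  let eta := Aadj v - u in
  let Om := Omega ipH phi kappa eta in
  let nuv := Num.sqrt (`|u| ^+ 2 + `|v| ^+ 2) in
  let Ninv := inv_opnorm A (spanH phi Om) in
  let c := (1 + C * nuv) ^+ 2 / (2 * C) in
  let d := 2 * Ninv * (1 + C * nuv)
           + (if Om == setT then 0
              else (1 + Ninv * opnorm A) / mgap ipH phi kappa eta * c) in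
  forall (delta : R), 0 < delta ->
  forall (ydelta : Y), `|ydelta - ys| <= delta ->
  let alpha := C * delta in
  let B := fun (x : X) (h : H) =>
    ((1 / 2 * `|W x - h| ^+ 2 + 1 / 2 * `|A h - ydelta| ^+ 2)%:E
     + alpha%:E * (Rf x + wl1 ipH phi kappa h))%E in
  forall (xa : X) (ha' : H),
    (forall (x : X) (h : H), (B xa ha' <= B x h)%E) ->
    (bregman ipX Rf (Wadj u) xa xs <= (c * delta)%:E)%E /\
    `|ha' - hs| <= d * delta.
Proof.
move=> eta Om nuv Ninv c d delta d0 ydelta hyd alpha B xa ha' hmin.
have [[hipX _] [hipH _] [hipY _]] := And3 hX hH hY.
have kappa_ge0 l : 0 <= kappa l := le_trans (ltW ha) (hk l).
have [hsW ysA] := h11; rewrite -ysA in hyd.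
have [Rs hRs] := subdiff_fin hRp.1 hRp.2 h12.
have [Ws hWs] := wl1_subdiff_fin hipH kappa_ge0 h13.
have [hbreg hres] := tikhonov_minimizer_estimate hipX hipH hipY hWadj hAadj hRp.1
  (wl1_ge0 ipH phi kappa_ge0) hsW hRs hWs h12 h13 hC d0 hyd (hmin xs hs).
have hbR := bregman_ge0 xa h12 hRs; have hbP := bregman_ge0 ha' h13 hWs.
rewrite -/nuv -/c in hbreg hres.
split; first exact: le_trans (leeDl _ hbP) hbreg.
have hAh : `|A (ha' - hs)| <= 2 * (1 + C * nuv) * delta.
  have : `|A ha' - A hs| <= `|A ha' - ydelta| + `|ydelta - A hs|.
    by rewrite -[X in `|X|](subrKA ydelta) ler_normD.
  by rewrite linearB; lra.
apply: le_trans (norm_sub_le_of_bregman hipH hipY hphi hLam ha hk h13 hA h14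
  (le_trans (leeDr _ hbR) hbreg) hAh) _.
by rewrite /d -/eta -/Om -/Ninv; case: ifP => _; lra.
Qed.
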